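(* Let $C$ be a complete structured DNNF, $g$ a var-gate or $\times$-gate of $C$, and $S\in S(g)$. Then the box of $g$ is the (unique) least common ancestor, in the tree of boxes, of the boxes containing the var-gates whose variables occur in $S$.
   Context: A set circuit $C=(G,W,\mu)$ is a finite DAG with gates $G$, wires $W\subseteq G\times G$, gate types $\mu(g)\in\{\top,\bot,\mathrm{var},\times,\cup\}$, and an injective map $S_{\mathrm{var}}$ giving each var-gate a set of variables; $C_{\mathrm{var}}$ is the union of all $S_{\mathrm{var}}(g)$. Inputs of $g$ are the $g'$ with $(g',g)\in W$; $\top,\bot,\mathrm{var}$-gates have no inputs, $\times$-gates exactly two, $\cup$-gates at least one, and $\top,\bot$-gates are never inputs of any gate. Captured sets: $S(g)=\{S_{\mathrm{var}}(g)\}$ for var-gates, $\emptyset$ for $\bot$, $\{\emptyset\}$ for $\top$, $\{S_1\cup S_2\mid S_1\in S(g_1),S_2\in S(g_2)\}$ for a $\times$-gate with inputs $g_1,g_2$, the union over inputs for $\cup$-gates. A v-tree $\mathcal{T}$ for $C$ is a binary tree whose leaves are labeled by sets of variables forming a partition of $C_{\mathrm{var}}$. A structuring function $\sigma$ from $C$ to $\mathcal{T}$ maps each var-gate $g$ to a leaf whose label contains $S_{\mathrm{var}}(g)$, ensures that for each wire $(g',g)$ either $\sigma(g')=\sigma(g)$ or $g'$ is a $\cup$-gate with $\sigma(g')$ a child of $\sigma(g)$, and that each $\times$-gate $g$ has one input mapped to the left child and one to the right child of $\sigma(g)$. A complete structured DNNF is $C$ with such $\mathcal{T}$ and $\sigma$.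 The box of a gate $g$ is $\sigma^{-1}(\sigma(g))$; the boxes $\sigma^{-1}(m)$ for nodes $m$ of $\mathcal{T}$ form a tree (the tree of boxes) isomorphic to $\mathcal{T}$. *)

From mathcomp Require Import all_boot.
Set Implicit Arguments. Unset Strict Implicit. Unset Printing Implicit Defensive.

Inductive gtype := GTop | GBot | GVar | GTimes | GUnion.

Record set_circuit (G X : finType) := SetCircuit {
  wire : rel G;                 (* wire g' g  <->  (g', g) \in W *)
  mu   : G -> gtype;
  svar : G -> {set X}           (* S_var, only meaningful on var-gates *)
}.

Definition inputs (G X : finType) (C : set_circuit G X) (g : G) : {set G} :=
  [set g' | wire C g' g].

Definition wf_circuit (G X : finType) (C : set_circuit G X) : Prop :=
  (forall g g', wire C g' g -> ~~ connect (wire C) g g') /\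
  (forall g, mu C g = GTop \/ mu C g = GBot \/ mu C g = GVar -> inputs C g = set0) /\
  (forall g, mu C g = GTimes -> #|inputs C g| = 2) /\
  (forall g, mu C g = GUnion -> 0 < #|inputs C g|) /\
  (forall g g', wire C g g' -> mu C g <> GTop /\ mu C g <> GBot) /\
  (forall g1 g2, mu C g1 = GVar -> mu C g2 = GVar -> svar C g1 = svar C g2 -> g1 = g2) /\
  (forall g, mu C g = GVar -> svar C g != set0).

Definition is_var_type (k : gtype) : bool := if k is GVar then true else false.

Definition Cvar (G X : finType) (C : set_circuit G X) : {set X} :=
  \bigcup_(g | is_var_type (mu C g)) svar C g.

(* captures C g S  <->  S \in S(g) *)
Inductive captures (G X : finType) (C : set_circuit G X) : G -> {set X} -> Prop :=
| cap_var g : mu C g = GVar -> captures C g (svar C g)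
| cap_top g : mu C g = GTop -> captures C g set0
| cap_times g g1 g2 S1 S2 :
    mu C g = GTimes -> wire C g1 g -> wire C g2 g -> g1 != g2 ->
    captures C g1 S1 -> captures C g2 S2 -> captures C g (S1 :|: S2)
| cap_union g g' S :
    mu C g = GUnion -> wire C g' g -> captures C g' S -> captures C g S.

(* full binary trees with leaves labelled by variable sets;
   nodes are addressed by paths (false = left child, true = right child) *)
Inductive vtree (X : finType) := VLeaf of {set X} | VNode of vtree X & vtree X.

Fixpoint subtree (X : finType) (t : vtree X) (p : seq bool) : option (vtree X) :=
  match p with
  | [::] => Some t
  | b :: p' => match t with
               | VLeaf _ => None
               | VNode l r => subtree (if b then r else l) p'
               end
  end.

Definition is_node (X : finType) (t : vtree X) (p : seq bool) : bool :=
  isSome (subtree t p).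

Definition leaf_label (X : finType) (t : vtree X) (p : seq bool) : option {set X} :=
  match subtree t p with Some (VLeaf A) => Some A | _ => None end.

Definition is_leaf (X : finType) (t : vtree X) (p : seq bool) : bool :=
  isSome (leaf_label t p).

Definition ancestor (m n : seq bool) : bool := prefix m n.

Definition vtree_for (G X : finType) (C : set_circuit G X) (t : vtree X) : Prop :=
  (forall p A, leaf_label t p = Some A -> A != set0) /\
  (forall p q A B, leaf_label t p = Some A -> leaf_label t q = Some B ->
      p <> q -> [disjoint A & B]) /\
  (forall x, x \in Cvar C <-> exists p A, leaf_label t p = Some A /\ x \in A).

Definition structuring (G X : finType) (C : set_circuit G X) (t : vtree X)
    (sigma : G -> seq bool) : Prop :=
  (forall g, is_node t (sigma g)) /\
  (forall g, mu C g = GVar ->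
     exists A, leaf_label t (sigma g) = Some A /\ svar C g \subset A) /\
  (forall g g', wire C g' g ->
     sigma g' = sigma g \/
     (mu C g' = GUnion /\ exists b, sigma g' = rcons (sigma g) b)) /\
  (forall g, mu C g = GTimes ->
     exists g1 g2, [/\ wire C g1 g, wire C g2 g,
                       sigma g1 = rcons (sigma g) false &
                       sigma g2 = rcons (sigma g) true]).

Definition is_lca (X : finType) (t : vtree X) (A : seq bool -> Prop) (m : seq bool) : Prop :=
  is_node t m /\
  (forall n, A n -> ancestor m n) /\
  (forall m', is_node t m' -> (forall n, A n -> ancestor m' n) -> ancestor m' m).

From mathcomp Require Import all_boot.
Set Implicit Arguments.
Unset Strict Implicit.
Unset Printing Implicit Defensive.

(* Following wires down from a gate only descends in the v-tree, and every
   variable x of a set captured at g is carried by some var-gate reached from g.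
   The leaf labels are disjoint, so all var-gates containing x share one box:
   hence the box of g is a common ancestor of the boxes of the var-gates meeting
   S.  It is the least one: for a var-gate, its own box is among them; for a
   times-gate, S = S1 u S2 with S1, S2 captured at inputs sitting on the two
   different children of the box of g, and both are nonempty because top-gates
   are never inputs and var-gates carry nonempty sets.  A common ancestor of a
   box below the left child and a box below the right child is an ancestor of
   the box of g. *)

Lemma prefix_shorter (T : eqType) (a b w : seq T) :
  prefix a w -> prefix b w -> size a <= size b -> prefix a b.
Proof.
rewrite !prefixE => /eqP wa /eqP wb le_ab.
by rewrite -wb take_takel // wa.
Qed.

Lemma prefix_fork (T : eqType) (m s w1 w2 : seq T) (x1 x2 : T) :
  x1 != x2 -> prefix (rcons s x1) w1 -> prefix (rcons s x2) w2 ->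
  prefix m w1 -> prefix m w2 -> prefix m s.
Proof.
move=> x12 sw1 sw2 mw1 mw2.
have sw1' : prefix s w1 := prefix_trans (prefix_rcons s x1) sw1.
have [le_ms|lt_sm] := leqP (size m) (size s).
  exact: prefix_shorter mw1 sw1' le_ms.
have take_m x w : prefix (rcons s x) w -> prefix m w -> take (size s).+1 m = rcons s x.
  move=> sw mw; apply/eqP.
  by rewrite -(size_rcons s x) -prefixE (prefix_shorter sw mw) // size_rcons.
have /rcons_inj[/eqP] : rcons s x1 = rcons s x2.
  by rewrite -(take_m _ _ sw1 mw1) (take_m _ _ sw2 mw2).
by rewrite (negbTE x12).
Qed.

Lemma captures_var (G X : finType) (C : set_circuit G X) g S :
  mu C g = GVar -> captures C g S -> S = svar C g.
Proof. by move=> gV gS; case: gS gV => // [g0 -> | g0 g1 g2 S1 S2 -> | g0 g1 S0 ->]. Qed.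

Section StructuredDNNF.

Variables (G X : finType) (C : set_circuit G X) (t : vtree X) (sigma : G -> seq bool).
Hypothesis C_wf : wf_circuit C.
Hypothesis t_for_C : vtree_for C t.
Hypothesis sigma_str : structuring C t sigma.

Lemma wire_sigma_prefix g' g : wire C g' g -> prefix (sigma g) (sigma g').
Proof.
have [_ [_ [sigma_wire _]]] := sigma_str.
by case/sigma_wire => [-> | [_ [b ->]]]; [exact: prefix_refl | exact: prefix_rcons].
Qed.

Lemma captures_var_below g S x : captures C g S -> x \in S ->
  exists g', [/\ mu C g' = GVar, x \in svar C g' & prefix (sigma g) (sigma g')].
Proof.
elim=> {g S} [g gV | g _ | g g1 g2 S1 S2 _ w1 w2 _ _ IH1 _ IH2 | g g1 S _ w1 _ IH1].
- by exists g; rewrite prefix_refl.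
- by rewrite inE.
- rewrite inE => /orP[/IH1 | /IH2] [g' [g'V xg' below]]; exists g'; split => //.
    exact: prefix_trans (wire_sigma_prefix w1) below.
  exact: prefix_trans (wire_sigma_prefix w2) below.
- case/IH1 => g' [g'V xg' below]; exists g'; split => //.
  exact: prefix_trans (wire_sigma_prefix w1) below.
Qed.

Lemma captures_neq0 g S : captures C g S -> mu C g <> GTop -> S != set0.
Proof.
have [_ [_ [_ [_ [not_top [_ var_neq0]]]]]] := C_wf.
elim=> {g S} [g gV _ | // | g g1 g2 S1 S2 _ w1 _ _ _ IH1 _ _ _ | g g1 S _ w1 _ IH1 _].
- exact: var_neq0.
- apply: contraNneq (IH1 (proj1 (not_top _ _ w1))) => S12_0.
  by rewrite -subset0 -S12_0 subsetUl.
- exact: IH1 (proj1 (not_top _ _ w1)).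
Qed.

Lemma var_gates_share_box g1 g2 x : mu C g1 = GVar -> mu C g2 = GVar ->
  x \in svar C g1 -> x \in svar C g2 -> sigma g1 = sigma g2.
Proof.
have [_ [leaf_disj _]] := t_for_C; have [_ [var_leaf _]] := sigma_str.
move=> /var_leaf[A1 [l1 sub1]] /var_leaf[A2 [l2 sub2]] x1 x2.
have [//|/eqP neq12] := eqVneq (sigma g1) (sigma g2).
have /pred0P/(_ x) := leaf_disj _ _ _ _ l1 l2 neq12.
by rewrite /= (subsetP sub1) ?(subsetP sub2).
Qed.

Lemma times_inputs_fork g g1 g2 : mu C g = GTimes ->
  wire C g1 g -> wire C g2 g -> g1 != g2 ->
  exists b, sigma g1 = rcons (sigma g) b /\ sigma g2 = rcons (sigma g) (~~ b).
Proof.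
have [_ [_ [times_card _]]] := C_wf; have [_ [_ [_ sigma_times]]] := sigma_str.
move=> gT w1 w2 g12; have [h1 [h2 [wh1 wh2 sh1 sh2]]] := sigma_times g gT.
have h12 : h1 != h2.
  by apply/eqP => eq_h; move: sh2; rewrite -eq_h sh1 => /rcons_inj.
have inputsE : inputs C g = [set h1; h2].
  apply/esym/eqP; rewrite eqEcard cards2 h12 times_card // andbT.
  by apply/subsetP => h; rewrite !inE => /orP[] /eqP ->.
have : g1 \in inputs C g by rewrite inE.
have : g2 \in inputs C g by rewrite inE.
rewrite inputsE !inE => /orP[] /eqP e2 /orP[] /eqP e1; subst g1 g2.
- by rewrite eqxx in g12.
- by exists true.
- by exists false.
- by rewrite eqxx in g12.
Qed.

Definition boxes_meeting (S : {set X}) (n : seq bool) : Prop :=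
  exists g', [/\ mu C g' = GVar, svar C g' :&: S != set0 & n = sigma g'].

Lemma boxes_meetingS (S1 S2 : {set X}) n :
  S1 \subset S2 -> boxes_meeting S1 n -> boxes_meeting S2 n.
Proof.
move=> sub12 [g' [g'V meet1 ->]]; exists g'; split=> //.
by apply: contraNneq meet1 => meet2_0; rewrite -subset0 -meet2_0 setIS.
Qed.

Lemma captures_box_meeting g S : captures C g S -> mu C g <> GTop ->
  exists2 n, boxes_meeting S n & prefix (sigma g) n.
Proof.
move=> gS /(captures_neq0 gS)/set0Pn[x xS].
have [g' [g'V xg' below]] := captures_var_below gS xS.
exists (sigma g') => //; exists g'; split=> //.
by apply/set0Pn; exists x; rewrite inE xg'.
Qed.

Lemma box_meeting_below g S n :
  captures C g S -> boxes_meeting S n -> prefix (sigma g) n.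
Proof.
move=> gS [g'' [g''V /set0Pn[x /setIP[xg'' xS]] ->]].
have [g' [g'V xg' below]] := captures_var_below gS xS.
by rewrite -(var_gates_share_box g'V g''V xg' xg'').
Qed.

Lemma var_box_least g S m : mu C g = GVar -> captures C g S ->
  (forall n, boxes_meeting S n -> prefix m n) -> prefix m (sigma g).
Proof.
have [_ [_ [_ [_ [_ [_ var_neq0]]]]]] := C_wf.
move=> gV gS lb; apply: lb; exists g; split=> //.
by rewrite (captures_var gV gS) setIid var_neq0.
Qed.

Lemma times_box_least g S m : mu C g = GTimes -> captures C g S ->
  (forall n, boxes_meeting S n -> prefix m n) -> prefix m (sigma g).
Proof.
have [_ [_ [_ [_ [not_top _]]]]] := C_wf.
move=> gT gS; case: gS gT => [g0 -> | g0 -> | | g0 g1 S0 ->] //.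
move=> {}g g1 g2 S1 S2 _ w1 w2 g12 c1 c2 gT lb.
have [b [s1 s2]] := times_inputs_fork gT w1 w2 g12.
have [n1 n1S1 below1] := captures_box_meeting c1 (proj1 (not_top _ _ w1)).
have [n2 n2S2 below2] := captures_box_meeting c2 (proj1 (not_top _ _ w2)).
rewrite s1 in below1; rewrite s2 in below2.
have lb1 : prefix m n1 by apply/lb/(boxes_meetingS _ n1S1); rewrite subsetUl.
have lb2 : prefix m n2 by apply/lb/(boxes_meetingS _ n2S2); rewrite subsetUr.
by apply: prefix_fork _ below1 below2 lb1 lb2; case: (b).
Qed.

End StructuredDNNF.

Theorem lemma5p1 (G X : finType) (C : set_circuit G X) (t : vtree X)
    (sigma : G -> seq bool) (g : G) (S : {set X}) :
  wf_circuit C -> vtree_for C t -> structuring C t sigma ->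
  (mu C g = GVar \/ mu C g = GTimes) ->
  captures C g S ->
  is_lca t (fun m => exists g', [/\ mu C g' = GVar, svar C g' :&: S != set0 & m = sigma g'])
         (sigma g).
Proof.
move=> C_wf t_for_C sigma_str gVT gS; have [sigma_node _] := sigma_str.
split; [exact: sigma_node | split].
- by move=> n; exact: (box_meeting_below t_for_C sigma_str gS).
- move=> m _ lb; case: gVT => [gV | gT].
  + exact: (var_box_least C_wf gV gS lb).
  + exact: (times_box_least C_wf sigma_str gT gS lb).
Qed.
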